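(* Let $0\le c\le a\le 1/2$ and consider the following eight points of $\mathbb{R}^2$: $q_U=(a,3-c)$, $q_D=(a,-1-c)$, $q_{UL}=(-1+c,2+a)$, $q_L=(-1-a,c)$, $q_{LD}=(-1-c,-a)$, $q_{UR}=(2-c,3-a)$, $q_R=(3-a,c)$, $q_{RD}=(2+c,-1+a)$, and let $W$ be the set of these points. Then the segment $[q_U,q_D]$ is a Delaunay edge of $W$, i.e., there exists a circle passing through $q_U$ and $q_D$ such that every other point of $W$ lies outside or on this circle. *)

From mathcomp Require Import all_boot all_order all_algebra.
From mathcomp Require Import reals.
Set Implicit Arguments. Unset Strict Implicit. Unset Printing Implicit Defensive.
Import Order.TTheory GRing.Theory Num.Theory.
Local Open Scope ring_scope.

Definition sqdist (R : realType) (p q : R * R) : R :=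
  (p.1 - q.1) ^+ 2 + (p.2 - q.2) ^+ 2.

(* Squared distances are
   compared, which is equivalent since all quantities are nonnegative. *)
Definition delaunay_edge (R : realType) (W : seq (R * R)) (p q : R * R) : Prop :=
  exists (z : R * R) (r : R),
    0 < r /\ sqdist p z = r ^+ 2 /\ sqdist q z = r ^+ 2 /\
    (forall w, w \in W -> w != p -> w != q -> r ^+ 2 <= sqdist w z).

Section Pts.
Variables (R : realType) (a c : R).
Definition qU : R * R := (a, 3 - c).
Definition qD : R * R := (a, -1 - c).
Definition qUL : R * R := (-1 + c, 2 + a).
Definition qL : R * R := (-1 - a, c).
Definition qLD : R * R := (-1 - c, - a).
Definition qUR : R * R := (2 - c, 3 - a).
Definition qR : R * R := (3 - a, c).
Definition qRD : R * R := (2 + c, -1 + a).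
Definition W8 : seq (R * R) := [:: qU; qD; qUL; qL; qLD; qUR; qR; qRD].
End Pts.

(* The circle through qU and qD centred at (1 - a, 1 - c) works: for each of
   the six other points, the excess of its squared distance to the centre over
   the squared radius is a nonnegative combination of c, c^2, (a - c)^2,
   a (1 - 2a), (a - c)(1 - (a - c)) and (a - c)(1 - (a + c)), all of which are
   nonnegative when 0 <= c <= a <= 1/2. *)
From mathcomp Require Import all_boot all_order all_algebra.
From mathcomp Require Import reals.
From mathcomp Require Import ring lra.
Set Implicit Arguments. Unset Strict Implicit. Unset Printing Implicit Defensive.
Import Order.TTheory GRing.Theory Num.Theory.
Local Open Scope ring_scope.

Lemma delaunay_edge_center (R : realType) (W : seq (R * R)) (p q z : R * R) :
  0 < sqdist p z -> sqdist q z = sqdist p z ->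
  (forall w, w \in W -> w != p -> w != q -> sqdist p z <= sqdist w z) ->
  delaunay_edge W p q.
Proof.
move=> pz_gt0 qz_eq outside.
exists z, (Num.sqrt (sqdist p z)).
rewrite sqr_sqrtr ?ltW // sqrtr_gt0.
by split; last split; last split.
Qed.

Section EdgeqUqD.
Variables (R : realType) (a c : R).

Definition edge_center : R * R := (1 - a, 1 - c).
Definition edge_sqradius : R := (2 * a - 1) ^+ 2 + 4.

Lemma edge_sqradius_gt0 : 0 < edge_sqradius.
Proof. by rewrite ltr_wpDl ?sqr_ge0. Qed.

Lemma sqdist_qU_edge_center :
  sqdist (qU a c) edge_center = edge_sqradius.
Proof. by rewrite /sqdist /edge_sqradius /=; ring. Qed.

Lemma sqdist_qD_edge_center :
  sqdist (qD a c) edge_center = edge_sqradius.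
Proof. by rewrite /sqdist /edge_sqradius /=; ring. Qed.

Lemma W8_outside_edge_circle :
  0 <= c -> c <= a -> a <= 1 / 2 ->
  forall w, w \in W8 a c -> w != qU a c -> w != qD a c ->
  edge_sqradius <= sqdist w edge_center.
Proof.
move=> c_ge0 c_le_a a_le_half.
have amc_1mamc_ge0 : 0 <= (a - c) * (1 - (a - c)) by apply: mulr_ge0; lra.
have amc_1mapc_ge0 : 0 <= (a - c) * (1 - (a + c)) by apply: mulr_ge0; lra.
have a_1m2a_ge0 : 0 <= a * (1 - 2 * a) by apply: mulr_ge0; lra.
have sqr_c_ge0 : 0 <= c ^+ 2 by rewrite sqr_ge0.
have sqr_amc_ge0 : 0 <= (a - c) ^+ 2 by rewrite sqr_ge0.
move=> w; rewrite !inE => + nU nD.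
rewrite (negbTE nU) (negbTE nD) /= /edge_sqradius.
do 5 (case/orP => [/eqP->|]; first by rewrite /sqdist /=; lra).
by move/eqP->; rewrite /sqdist /=; lra.
Qed.

End EdgeqUqD.

Theorem mainTheorem7 (R : realType) (a c : R) :
  0 <= c -> c <= a -> a <= 1 / 2 ->
  delaunay_edge (W8 a c) (qU a c) (qD a c).
Proof.
move=> c_ge0 c_le_a a_le_half.
apply: (delaunay_edge_center (z := edge_center a c)).
- by rewrite sqdist_qU_edge_center edge_sqradius_gt0.
- by rewrite sqdist_qU_edge_center sqdist_qD_edge_center.
- by rewrite sqdist_qU_edge_center; exact: W8_outside_edge_circle.
Qed.
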